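(* Let $G=(V,E)$ be a graph, $S\subseteq V$, and let $M_a,M_b$ be matchings of $G$ such that $M_b$ hits at least $s\le|S|$ nodes of $S$. Then for every integer $k\ge1$ there is a matching $M_c$ of $G$, computable by a deterministic LOCAL algorithm in $O(k)$ rounds, such that: (i) $|M_c|\ge|M_a|$; (ii) $|V(M_a)\setminus(V(M_c)\cup S)|\le|(S\cap V(M_c))\setminus V(M_a)|$; (iii) $M_c$ hits at least $(1-1/k)s$ nodes of $S$.
   Context: For a matching $M$, $V(M)$ denotes the set of nodes that are endpoints of edges of $M$; $M$ hits $v$ iff $v\in V(M)$. LOCAL model: synchronous rounds, unique identifiers, unbounded messages; each node knows its incident edges in $M_a$ and $M_b$ and whether it lies in $S$. *)

From mathcomp Require Import all_boot.
Set Implicit Arguments. Unset Strict Implicit. Unset Printing Implicit Defensive.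

Definition is_graph (T : finType) (e : rel T) : Prop :=
  (forall u v, e u v = e v u) /\ (forall u, ~~ e u u).

Definition is_matching (T : finType) (e : rel T) (M : rel T) : Prop :=
  [/\ forall u v, M u v -> e u v,
      forall u v, M u v = M v u
    & forall u v w, M u v -> M u w -> v = w].

Definition edges_of (T : finType) (M : rel T) : {set {set T}} :=
  [set [set p.1; p.2] | p in [set p : T * T | M p.1 p.2]].

Definition msize (T : finType) (M : rel T) : nat := #|edges_of M|.

Definition VM (T : finType) (M : rel T) : {set T} := [set v | [exists u, M v u]].

Definition ball (T : finType) (e : rel T) (r : nat) (v : T) : {set T} :=
  iter r (fun X : {set T} => X :|: [set w | [exists x in X, e x w]]) [set v].

Definition valid_input (T : finType) (e : rel T) (Ma Mb : rel T) : Prop :=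
  [/\ is_graph e, is_matching e Ma & is_matching e Mb].

(* An algorithm on node set T (node identifiers = elements of T): maps
   (e, S, Ma, Mb) to the output relation Mc (each node v outputs its incident
   Mc-edges, i.e. the predicate Mc v). *)
Definition algorithm (T : finType) := rel T -> {set T} -> rel T -> rel T -> rel T.

(* r-round LOCAL computability: the output of every node v depends only on the
   input restricted to the radius-r ball around v (the topology incident to
   those nodes, their membership in S, and their incident Ma/Mb edges). *)
Definition local_in (T : finType) (r : nat) (A : algorithm T) : Prop :=
  forall (e e' : rel T) (S S' : {set T}) (Ma Ma' Mb Mb' : rel T) (v : T),
    valid_input e Ma Mb -> valid_input e' Ma' Mb' ->
    (forall u, u \in ball e r v ->
       [/\ u \in S = (u \in S'),
           forall w, e u w = e' u w,
           forall w, Ma u w = Ma' u w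
         & forall w, Mb u w = Mb' u w]) ->
    forall w, A e S Ma Mb v w = A e' S' Ma' Mb' v w.

(** Call y a root if y lies in S, is Ma-free and Mb-covered.  From each root
    follow the alternating path y -Mb- . -Ma- . -Mb- ... and stop at the first
    node in even position that is outside S or Mb-free, and in any case after
    k+1 Mb-edges.  Flipping these paths (their nodes take their Mb-edges, the
    Ma-edge at the end of a path is dropped) yields Mc.  Paths from distinct
    Ma-free roots never share a node in positions of equal parity, so every
    node that loses its Ma-edge is charged to a distinct root, which is a new
    S-node of Mc: this gives (i) and (ii).  An Mb-covered S-node left uncovered
    ends a path that did not stop, so the path carries k distinct Mb-covered
    S-nodes in even position; hence at most a 1/k fraction of S :&: V(Mb) is
    lost, which gives (iii).  Every path has length at most 2k+2, so a node
    decides its Mc-edges from its radius-(4k+5) ball. *)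

From mathcomp Require Import all_boot zify.
Set Implicit Arguments. Unset Strict Implicit. Unset Printing Implicit Defensive.

Lemma leq_card_inj_in (T1 T2 : finType) (f : T1 -> T2) (A : {set T1}) (B : {set T2}) :
  {in A &, injective f} -> {in A, forall x, f x \in B} -> #|A| <= #|B|.
Proof.
move=> f_inj fAB; rewrite -(card_in_imset f_inj); apply: subset_leq_card.
by apply/subsetP => _ /imsetP [x Ax ->]; apply: fAB.
Qed.

Section Matchings.
Variable T : finType.
Implicit Types (e M : rel T) (u v w : T).

Definition mate M u : option T := [pick w | M u w].

Lemma mate_some M u w : mate M u = Some w -> M u w.
Proof. by rewrite /mate; case: pickP => // x Mux [<-]. Qed.

Lemma eq_mate M M' u : M u =1 M' u -> mate M u = mate M' u.
Proof. exact: eq_pick. Qed.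

Lemma VMP M u : reflect (exists w, M u w) (u \in VM M).
Proof. by rewrite inE; apply: existsP. Qed.

Variable e : rel T.

Section OneMatching.
Variable M : rel T.
Hypothesis matM : is_matching e M.

Lemma matching_sym u v : M u v -> M v u.
Proof. by case: matM => _ ->. Qed.

Lemma matching_fun u v w : M u v -> M u w -> v = w.
Proof. by case: matM => _ _; apply. Qed.

Lemma mate_matching u w : M u w -> mate M u = Some w.
Proof.
move=> Muw; rewrite /mate; case: pickP => [x Mux|noM]; last by rewrite noM in Muw.
by rewrite (matching_fun Muw Mux).
Qed.

Lemma matching_edge a b x w : M a b -> M x w -> x \in [set a; b] -> [set a; b] = [set x; w].
Proof.
move=> Mab Mxw; case/set2P=> ax; subst x; first by rewrite (matching_fun Mab Mxw).
by rewrite (matching_fun (matching_sym Mab) Mxw) setUC.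
Qed.

Lemma card_VM : is_graph e -> #|VM M| = 2 * msize M.
Proof.
case=> _ e_irr; case: (matM) => Me Msym _.
rewrite /msize mulnC; apply: card_uniform_partition.
  move=> E /imsetP [p]; rewrite inE => Mp ->; rewrite cards2.
  by case: eqP => // p12; move: Mp; rewrite p12 => /Me; rewrite (negbTE (e_irr _)).
apply/and3P; split.
- apply/eqP/setP => x; apply/bigcupP/VMP.
    case=> E /imsetP [p]; rewrite inE => Mp -> /set2P [] ->; first by exists p.2.
    by exists p.1; rewrite Msym.
  by case=> w Mxw; exists [set x; w]; rewrite ?set21 //; apply/imsetP; exists (x, w); rewrite ?inE.
- apply/trivIsetP => _ _ /imsetP [[a b]] + -> /imsetP [[c d]] + -> neq.
  rewrite !inE /= => Mab Mcd; apply/pred0P => x /=; apply/negP => /andP [xab xcd].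
  have [w Mxw] : exists w, M x w.
    by move: xab => /set2P [] ->; [exists b | exists a; rewrite Msym].
  by move/eqP: neq; rewrite (matching_edge Mab Mxw xab) (matching_edge Mcd Mxw xcd).
- by apply/imsetP => -[p _ p0]; have := set21 p.1 p.2; rewrite -p0 inE.
Qed.

End OneMatching.
End Matchings.

Lemma double_or_succ_double i : exists j, i = 2 * j \/ i = (2 * j).+1.
Proof. by exists (i %/ 2); lia. Qed.

Section AlternatingWalk.
Variables (T : finType) (Ma Mb : rel T).

Definition alt t : rel T := if odd t then Ma else Mb.

Lemma alt_double j : alt (2 * j) = Mb.
Proof. by rewrite /alt oddM. Qed.

Lemma alt_double_succ j : alt (2 * j).+1 = Ma.
Proof. by rewrite /alt /= oddM. Qed.

Fixpoint alt_walk y t : option T :=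
  if t is t'.+1 then obind (mate (alt t')) (alt_walk y t') else Some y.

Lemma alt_walk_prev y t u :
  alt_walk y t.+1 = Some u -> exists2 z, alt_walk y t = Some z & alt t z u.
Proof. by rewrite /=; case: (alt_walk y t) => //= z /mate_some; exists z. Qed.

Variable e : rel T.
Hypotheses (matA : is_matching e Ma) (matB : is_matching e Mb).

Lemma alt_matching t : is_matching e (alt t).
Proof. by rewrite /alt; case: (odd t). Qed.

Lemma alt_walk_next y t z u :
  alt_walk y t = Some z -> alt t z u -> alt_walk y t.+1 = Some u.
Proof. by move=> /= -> /(mate_matching (alt_matching t)). Qed.

Lemma alt_walk_odd_VM y t u : odd t -> alt_walk y t.+1 = Some u -> u \in VM Ma.
Proof.
move=> t_odd /alt_walk_prev [z _]; rewrite /alt t_odd => Mzu.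
by apply/VMP; exists z; exact: (matching_sym matA Mzu).
Qed.

Lemma alt_walk_inj y y' i i' u : y \notin VM Ma -> y' \notin VM Ma ->
  odd i = odd i' -> alt_walk y i = Some u -> alt_walk y' i' = Some u -> y = y' /\ i = i'.
Proof.
move=> yA y'A; elim: i i' u => [|i IH] [|i'] u //=.
- by move=> _ [->] [->].
- move=> /esym/negbFE i'_odd [uy] /(alt_walk_odd_VM i'_odd).
  by rewrite -uy (negbTE yA).
- move=> /negbFE i_odd /(alt_walk_odd_VM i_odd) uA [uy'].
  by rewrite uy' uA in y'A.
- move=> /(congr1 negb); rewrite !negbK => parity.
  move=> /alt_walk_prev [z wz zu] /alt_walk_prev [z' wz' z'u].
  move: z'u; rewrite /alt -parity -/(alt i) => z'u.
  have zz' : z = z'.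
    exact: (matching_fun (alt_matching i) (matching_sym (alt_matching i) zu)
                         (matching_sym (alt_matching i) z'u)).
  by subst z'; case: (IH i' z parity wz wz') => -> ->.
Qed.

End AlternatingWalk.

Section Switch.
Variables (T : finType) (k : nat) (S : {set T}) (Ma Mb : rel T).
Local Notation walk := (alt_walk Ma Mb).

Definition root y := [&& y \in S, y \notin VM Ma & y \in VM Mb].

(* The path flipped from a root y consists of its first [2 * flip_len y] edges:
   it stops at the first position 2j, 0 < j <= k, whose node is outside S, is
   Mb-free or does not exist, and otherwise after k + 1 Mb-edges. *)
Definition stops y j : bool :=
  if walk y (2 * j) is Some c then (c \notin S) || (c \notin VM Mb) else true.

Definition flip_len y := (find (stops y) (iota 1 k)).+1.

Definition on_flip u := [exists y, root y &&
  [exists i : 'I_(2 * k + 2), (i < 2 * flip_len y) && (walk y i == Some u)]].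

Definition flip_end u := [exists y, root y && (walk y (2 * flip_len y) == Some u)].

Definition proposes u v :=
  if on_flip u then Mb u v else if flip_end u then false else Ma u v.

Definition switch u v := proposes u v && proposes v u.

Lemma flip_len_le y : flip_len y <= k.+1.
Proof. by have := find_size (stops y) (iota 1 k); rewrite size_iota. Qed.

Lemma stops_before y j : 0 < j -> j < flip_len y -> stops y j = false.
Proof.
move=> j_gt0 j_lt.
have j_find : j.-1 < find (stops y) (iota 1 k) by rewrite /flip_len in j_lt; lia.
have := before_find 0 j_find; rewrite nth_iota ?add1n ?prednK //.
by move: (find_size (stops y) (iota 1 k)); rewrite size_iota; lia.
Qed.

Lemma stops_flip_len y : flip_len y <= k -> stops y (flip_len y).
Proof.
rewrite /flip_len => lt_k.
have := @nth_find _ 0 (stops y) (iota 1 k); rewrite nth_iota ?add1n //.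
by apply; rewrite has_find size_iota.
Qed.

Lemma on_flipP u : reflect
  (exists y i, [/\ root y, i < 2 * flip_len y & walk y i = Some u]) (on_flip u).
Proof.
apply: (iffP existsP) => [[y /andP [ry /existsP [i /andP [lt /eqP wi]]]]|[y [i [ry lt wi]]]].
  by exists y, i.
have i_lt : i < 2 * k + 2 by have := flip_len_le y; lia.
by exists y; rewrite ry; apply/existsP; exists (Ordinal i_lt); rewrite /= lt wi eqxx.
Qed.

Lemma flip_endP u : reflect
  (exists2 y, root y & walk y (2 * flip_len y) = Some u) (flip_end u).
Proof.
apply: (iffP existsP) => [[y /andP [ry /eqP wy]]|[y ry wy]]; first by exists y.
by exists y; rewrite ry wy eqxx.
Qed.

Lemma root_notin_VM_Ma y : root y -> y \notin VM Ma.
Proof. by case/and3P. Qed.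

Lemma root_on_flip y : root y -> on_flip y.
Proof. by move=> ry; apply/on_flipP; exists y, 0. Qed.

Lemma walk_before_flip_end y j : root y -> j < flip_len y ->
  exists2 c, walk y (2 * j) = Some c & c \in S :&: VM Mb.
Proof.
case: j => [ry _|j _ lt]; first by exists y => //; case/and3P: ry => yS _ yB; apply/setIP.
have := stops_before (ltn0Sn j) lt; rewrite /stops.
case: (walk y _) => [c /negbT|//]; rewrite negb_or !negbK => cSB.
by exists c => //; apply/setIP/andP.
Qed.

Variable e : rel T.
Hypotheses (matA : is_matching e Ma) (matB : is_matching e Mb).

Lemma on_flip_VM_Mb u : on_flip u -> u \in VM Mb.
Proof.
case/on_flipP=> y [i [ry lt wi]]; have [j [ij|ij]] := double_or_succ_double i; subst i.
  have [|c] := walk_before_flip_end ry (_ : j < flip_len y); first by lia.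
  by rewrite wi => -[<-] /setIP [].
case/alt_walk_prev: wi => z _; rewrite alt_double => Mzu.
by apply/VMP; exists z; exact: (matching_sym matB Mzu).
Qed.

Lemma on_flip_Mb u w : on_flip u -> Mb u w -> on_flip w.
Proof.
case/on_flipP=> y [i [ry lt wi]] Muw; apply/on_flipP; exists y.
have [j [ij|ij]] := double_or_succ_double i; subst i.
  exists (2 * j).+1; split=> //; first by lia.
  by apply: (alt_walk_next matA matB wi); rewrite alt_double.
case/alt_walk_prev: wi => z wz; rewrite alt_double => Mzu.
exists (2 * j); split=> //; first by lia.
by rewrite wz (matching_fun matB (matching_sym matB Mzu) Muw).
Qed.

Lemma on_flip_Ma_mate u v : on_flip v -> Ma u v -> on_flip u || flip_end u.
Proof.
case/on_flipP=> y [i [ry lt wi]] Muv; have [j [ij|ij]] := double_or_succ_double i; subst i.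
  case: j lt wi => [_ [yv]|j lt].
    by case/and3P: ry => _ /VMP []; exists u; rewrite yv (matching_sym matA Muv).
  rewrite (_ : 2 * j.+1 = (2 * j).+2); last by lia.
  case/alt_walk_prev=> z wz; rewrite alt_double_succ => Mzv.
  have <- := matching_fun matA (matching_sym matA Mzv) (matching_sym matA Muv).
  by apply/orP; left; apply/on_flipP; exists y, (2 * j).+1; split=> //; lia.
have wu : walk y (2 * j.+1) = Some u.
  rewrite (_ : 2 * j.+1 = (2 * j).+2); last by lia.
  by apply: (alt_walk_next matA matB wi); rewrite alt_double_succ (matching_sym matA Muv).
have [lt'|eq'] : 2 * j.+1 < 2 * flip_len y \/ 2 * j.+1 = 2 * flip_len y by lia.
  by apply/orP; left; apply/on_flipP; exists y, (2 * j.+1).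
by apply/orP; right; apply/flip_endP; exists y; rewrite -?eq'.
Qed.

Lemma flip_end_Ma_mate u v : flip_end v -> Ma u v -> on_flip u.
Proof.
case/flip_endP=> y ry.
rewrite (_ : 2 * flip_len y = (2 * (flip_len y).-1).+2); last by rewrite /flip_len; lia.
case/alt_walk_prev=> z wz; rewrite alt_double_succ => Mzv Muv.
have <- := matching_fun matA (matching_sym matA Mzv) (matching_sym matA Muv).
by apply/on_flipP; exists y, (2 * (flip_len y).-1).+1; split=> //; rewrite /flip_len; lia.
Qed.

Lemma switch_matching : is_matching e switch.
Proof.
case: matA => Ae _ Afun; case: matB => Be _ Bfun; split.
- move=> u v /andP [+ _]; rewrite /proposes.
  by case: ifP => _; [apply: Be|case: ifP => // _; apply: Ae].
- by move=> u v; rewrite /switch andbC.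
- move=> u v w /andP [+ _] /andP [+ _]; rewrite /proposes.
  by case: ifP => _; [apply: Bfun|case: ifP => // _; apply: Afun].
Qed.

Lemma on_flip_switch u w : on_flip u -> Mb u w -> switch u w.
Proof.
move=> fu Muw; have fw := on_flip_Mb fu Muw.
by rewrite /switch /proposes fu fw Muw (matching_sym matB Muw).
Qed.

Lemma on_flip_VM_switch u : on_flip u -> u \in VM switch.
Proof.
move=> fu; have /VMP [w Muw] := on_flip_VM_Mb fu.
by apply/VMP; exists w; apply: on_flip_switch.
Qed.

Lemma off_flip_switch u v : ~~ on_flip u -> ~~ flip_end u -> Ma u v -> switch u v.
Proof.
move=> nfu neu Muv; have Mvu := matching_sym matA Muv.
have nfv : on_flip v = false.
  by apply/negbTE/negP => /on_flip_Ma_mate /(_ Muv); rewrite (negbTE nfu) (negbTE neu).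
have nev : flip_end v = false.
  by apply/negbTE/negP => /flip_end_Ma_mate /(_ Muv); rewrite (negbTE nfu).
by rewrite /switch /proposes (negbTE nfu) (negbTE neu) nfv nev Muv Mvu.
Qed.

Lemma uncovered_flip_end u : u \notin VM switch ->
  (u \in VM Ma) || (u \in S :&: VM Mb) -> flip_end u.
Proof.
move=> nu; apply: contraTT => neu.
have nfu : ~~ on_flip u by apply: contra nu; apply: on_flip_VM_switch.
have nuA : u \notin VM Ma.
  by apply: contra nu => /VMP [v Muv]; apply/VMP; exists v; apply: off_flip_switch.
rewrite negb_or nuA /=; apply: contra nfu => /setIP [uS uB].
by apply: root_on_flip; rewrite /root uS nuA uB.
Qed.

Definition end_root u :=
  odflt u [pick y | root y && (walk y (2 * flip_len y) == Some u)].

Lemma end_rootP u : flip_end u ->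
  root (end_root u) /\ walk (end_root u) (2 * flip_len (end_root u)) = Some u.
Proof.
case/flip_endP=> y ry wy; rewrite /end_root; case: pickP => [z /andP [rz /eqP wz] //|none].
by move: (none y); rewrite ry wy eqxx.
Qed.

Lemma end_root_inj : {in flip_end &, injective end_root}.
Proof.
move=> u v /end_rootP [_ wu] /end_rootP [_ wv] uv.
by move: wu; rewrite uv wv => -[].
Qed.

Lemma card_uncovered_Ma : #|VM Ma :\: VM switch| <= #|(S :&: VM switch) :\: VM Ma|.
Proof.
have lost_end u : u \in VM Ma :\: VM switch -> flip_end u.
  by case/setDP=> uA nu; apply: uncovered_flip_end nu _; rewrite uA.
apply: (@leq_card_inj_in _ _ end_root).
  by move=> u v /lost_end eu /lost_end ev; apply: end_root_inj.
move=> u /lost_end /end_rootP [ry _]; move: (ry) => /and3P [yS nyA _].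
by rewrite in_setD in_setI nyA yS on_flip_VM_switch ?root_on_flip.
Qed.

Lemma card_uncovered_Ma_outside_S :
  #|VM Ma :\: (VM switch :|: S)| <= #|(S :&: VM switch) :\: VM Ma|.
Proof.
apply: leq_trans card_uncovered_Ma; apply: subset_leq_card; apply/subsetP => x.
by rewrite !in_setD in_setU negb_or => /andP [/andP [-> _] ->].
Qed.

Hypothesis graph : is_graph e.

Lemma msize_switch : msize Ma <= msize switch.
Proof.
rewrite -(leq_pmul2l (_ : 0 < 2)) // -(card_VM matA graph) -(card_VM switch_matching graph).
rewrite -(cardsID (VM switch) (VM Ma)) -(cardsID (VM Ma) (VM switch)) setIC leq_add2l.
apply: leq_trans card_uncovered_Ma _; apply: subset_leq_card; apply/subsetP => x.
by rewrite !in_setD in_setI => /andP [-> /andP [_ ->]].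
Qed.

Lemma flip_end_full y u : root y -> walk y (2 * flip_len y) = Some u ->
  u \in S :&: VM Mb -> flip_len y = k.+1.
Proof.
move=> ry wu /setIP [uS uB]; apply/eqP; rewrite eqn_leq flip_len_le /=.
by apply: contraT; rewrite -leqNgt => /stops_flip_len; rewrite /stops wu uS uB.
Qed.

(* A lost node u ends a path that did not stop, and (u, j) is sent to the node
   at position 2j of that path; these nodes are distinct by [alt_walk_inj]. *)
Lemma card_uncovered_S_VM_Mb : k * #|(S :&: VM Mb) :\: VM switch| <= #|S :&: VM Mb|.
Proof.
set L := (S :&: VM Mb) :\: VM switch.
have endL u : u \in L -> flip_end u.
  by case/setDP=> uSB nu; apply: uncovered_flip_end nu _; rewrite uSB orbT.
pose h (p : T * 'I_k) := odflt p.1 (walk (end_root p.1) (2 * p.2)).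
have hP p : p \in setX L [set: 'I_k] ->
    walk (end_root p.1) (2 * p.2) = Some (h p) /\ h p \in S :&: VM Mb.
  case: p => u j; rewrite in_setX in_setT andbT /= => Lu.
  have [ry wy] := end_rootP (endL u Lu).
  have full : flip_len (end_root u) = k.+1.
    by apply: flip_end_full ry wy _; case/setDP: Lu.
  have [|c wc cSB] := walk_before_flip_end ry (_ : j < flip_len (end_root u)).
    by rewrite full ltnS ltnW.
  by rewrite /h /= wc.
rewrite mulnC -[k in _ * k]card_ord -cardsT -cardsX.
apply: (@leq_card_inj_in _ _ h) => [[u i] [v j] Lp Lq hpq|p /hP [] //].
have [wp _] := hP _ Lp; have [wq _] := hP _ Lq.
move: Lp Lq; rewrite !in_setX /=.
move=> /andP [/endL /end_rootP [ru wu] _] /andP [/endL /end_rootP [rv wv] _].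
have par : odd (2 * i) = odd (2 * j) by rewrite !oddM.
have wq' : walk (end_root v) (2 * j) = Some (h (u, i)) by rewrite hpq.
have [ruv /eqP] :=
  alt_walk_inj matA matB (root_notin_VM_Ma ru) (root_notin_VM_Ma rv) par wp wq'.
rewrite eqn_pmul2l // => /eqP/val_inj ->.
by move: wu; rewrite ruv wv => -[->].
Qed.

Lemma switch_hits_S : (k - 1) * #|S :&: VM Mb| <= k * #|S :&: VM switch|.
Proof.
have lost := card_uncovered_S_VM_Mb.
have cover : #|S :&: VM Mb| <= #|S :&: VM switch| + #|(S :&: VM Mb) :\: VM switch|.
  rewrite -(cardsID (VM switch) (S :&: VM Mb)) leq_add2r; apply: subset_leq_card.
  by apply/subsetP => x; rewrite !in_setI => /andP [/andP [-> _] ->].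
move: lost cover; move: #|_ :\: _| #|S :&: VM switch| #|S :&: VM Mb| => l a b; nia.
Qed.

End Switch.

Section Balls.
Variables (T : finType) (e : rel T).

Lemma ballS r v : ball e r.+1 v = ball e r v :|: [set w | [exists x in ball e r v, e x w]].
Proof. by []. Qed.

Lemma ball_center v : v \in ball e 0 v.
Proof. exact: set11. Qed.

Lemma ball_le r r' v x : r <= r' -> x \in ball e r v -> x \in ball e r' v.
Proof.
move=> /subnK <-; elim: (r' - r) => [//|d IH] xr.
by rewrite addSn ballS in_setU IH.
Qed.

Lemma ball_edge r v x w : x \in ball e r v -> e x w -> w \in ball e r.+1 v.
Proof.
move=> xr exw; rewrite ballS in_setU inE; apply/orP; right.
by apply/existsP; exists x; rewrite xr.
Qed.

Section Walks.
Variables (Ma Mb : rel T).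
Hypotheses (matA : is_matching e Ma) (matB : is_matching e Mb).

Lemma alt_edge t z w : alt Ma Mb t z w -> e z w.
Proof. by case: (alt_matching matA matB t) => alt_e _ _; apply: alt_e. Qed.

Lemma alt_walk_from_ball y t u r v :
  alt_walk Ma Mb y t = Some u -> y \in ball e r v -> u \in ball e (r + t) v.
Proof.
elim: t u => [u [<-]|t IH u /alt_walk_prev [z wz zu] yr]; first by rewrite addn0.
by rewrite addnS; apply: ball_edge (IH z wz yr) (alt_edge zu).
Qed.

Hypothesis graph : is_graph e.

Lemma alt_walk_to_ball y t u r v :
  alt_walk Ma Mb y t = Some u -> u \in ball e r v -> y \in ball e (r + t) v.
Proof.
elim: t u r => [u r [<-]|t IH u r /alt_walk_prev [z wz zu] ur]; first by rewrite addn0.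
rewrite addnS -addSn; apply: IH wz _; apply: ball_edge ur _.
by case: graph => -> _; apply: alt_edge zu.
Qed.

End Walks.
End Balls.

Lemma eq_ball (T : finType) (e e' : rel T) R v :
  (forall u, u \in ball e R v -> e u =1 e' u) ->
  forall r, r <= R -> ball e r v = ball e' r v.
Proof.
move=> ee'; elim=> [//|r IH] lt_R.
rewrite !ballS -IH ?(ltnW lt_R) //; congr (_ :|: _); apply/setP => w; rewrite !inE.
apply: eq_existsb => x; case xr: (x \in ball e r v) => //=.
by apply: ee'; apply: ball_le xr; apply: ltnW.
Qed.

Lemma eq_VM (T : finType) (M M' : rel T) u : M u =1 M' u -> (u \in VM M) = (u \in VM M').
Proof. by move=> MM'; rewrite !inE; apply: eq_existsb. Qed.

Definition agree_on_ball (T : finType) (e e' : rel T) (S S' : {set T})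
    (Ma Ma' Mb Mb' : rel T) (R : nat) (v : T) :=
  forall u, u \in ball e R v ->
    [/\ (u \in S) = (u \in S'), forall w, e u w = e' u w,
        forall w, Ma u w = Ma' u w & forall w, Mb u w = Mb' u w].

Section Agreement.
Variables (T : finType) (e e' : rel T) (S S' : {set T}) (Ma Ma' Mb Mb' : rel T).
Variables (R : nat) (v : T).
Hypothesis agree : agree_on_ball e e' S S' Ma Ma' Mb Mb' R v.

Lemma agree_on_ball_ball r : r <= R -> ball e r v = ball e' r v.
Proof. by apply: eq_ball => u /agree []. Qed.

Lemma agree_on_ball_sym : agree_on_ball e' e S' S Ma' Ma Mb' Mb R v.
Proof.
move=> u; rewrite -agree_on_ball_ball //.
by case/agree => uS ee' AA' BB'; split=> // w; rewrite ?ee' ?AA' ?BB'.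
Qed.

End Agreement.

Lemma local_in_le (T : finType) r r' (A : algorithm T) :
  r <= r' -> local_in r A -> local_in r' A.
Proof.
move=> le_r loc e e' S S' Ma Ma' Mb Mb' v valid valid' agree.
by apply: loc valid valid' _ => u ur; apply: agree; apply: ball_le ur.
Qed.

Section Locality.
Variables (T : finType) (k R : nat) (v : T).
Variables (e e' : rel T) (S S' : {set T}) (Ma Ma' Mb Mb' : rel T).
Hypothesis agree : agree_on_ball e e' S S' Ma Ma' Mb Mb' R v.
Hypotheses (matA : is_matching e Ma) (matB : is_matching e Mb).

Lemma alt_walk_agree y r t : y \in ball e r v -> r + t <= R ->
  alt_walk Ma Mb y t = alt_walk Ma' Mb' y t.
Proof.
move=> yr; elim: t => [//|t IH] lt_R; rewrite /= -IH; last by lia.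
case wz: (alt_walk Ma Mb y t) => [z|] //=; apply: eq_mate => w.
have zR : z \in ball e R v by apply: ball_le (alt_walk_from_ball matA matB wz yr); lia.
have [_ _ AA' BB'] := agree zR.
by rewrite /alt; case: (odd t); [apply: AA'|apply: BB'].
Qed.

Lemma VM_agree u : u \in ball e R v ->
  (u \in VM Ma) = (u \in VM Ma') /\ (u \in VM Mb) = (u \in VM Mb').
Proof. by case/agree=> _ _ AA' BB'; split; apply: eq_VM. Qed.

Lemma root_agree y : y \in ball e R v -> root S Ma Mb y = root S' Ma' Mb' y.
Proof.
move=> yR; have [yA yB] := VM_agree yR.
by case: (agree yR) => yS _ _ _; rewrite /root yS yA yB.
Qed.

Lemma flip_len_agree y r : y \in ball e r v -> r + 2 * k <= R ->
  flip_len k S Ma Mb y = flip_len k S' Ma' Mb' y.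
Proof.
move=> yr lt_R; rewrite /flip_len; congr _.+1; apply: eq_in_find => j.
rewrite mem_iota => /andP [_ lt_j]; rewrite /stops -(alt_walk_agree yr); last by lia.
case wc: (alt_walk Ma Mb y _) => [c|] //.
have cR : c \in ball e R v by apply: ball_le (alt_walk_from_ball matA matB wc yr); lia.
by have [cA cB] := VM_agree cR; case: (agree cR) => cS _ _ _; rewrite cS cB.
Qed.

Hypothesis graph : is_graph e.
Hypothesis R_large : 4 * k + 5 <= R.

Lemma on_flip_agree u :
  u \in ball e 1 v -> on_flip k S Ma Mb u -> on_flip k S' Ma' Mb' u.
Proof.
move=> u1 /on_flipP [y [i [ry lt wi]]]; have le_k := flip_len_le k S Ma Mb y.
have yr := alt_walk_to_ball matA matB graph wi u1.
apply/on_flipP; exists y, i; split.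
- by rewrite -root_agree //; apply: ball_le yr; lia.
- by rewrite -(flip_len_agree yr); lia.
- by rewrite -(alt_walk_agree yr) //; lia.
Qed.

Lemma flip_end_agree u :
  u \in ball e 1 v -> flip_end k S Ma Mb u -> flip_end k S' Ma' Mb' u.
Proof.
move=> u1 /flip_endP [y ry wy]; have le_k := flip_len_le k S Ma Mb y.
have yr := alt_walk_to_ball matA matB graph wy u1.
apply/flip_endP; exists y.
  by rewrite -root_agree //; apply: ball_le yr; lia.
by rewrite -(flip_len_agree yr) -?(alt_walk_agree yr) //; lia.
Qed.

End Locality.

Definition switch_alg (T : finType) (k : nat) : algorithm T :=
  fun _ S Ma Mb => switch k S Ma Mb.

Section SwitchLocal.
Variables (T : finType) (k : nat) (v : T).
Variables (e e' : rel T) (S S' : {set T}) (Ma Ma' Mb Mb' : rel T).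
Hypotheses (valid : valid_input e Ma Mb) (valid' : valid_input e' Ma' Mb').
Hypothesis agree : agree_on_ball e e' S S' Ma Ma' Mb Mb' (4 * k + 5) v.

Lemma proposes_agree u w :
  u \in ball e 1 v -> proposes k S Ma Mb u w = proposes k S' Ma' Mb' u w.
Proof.
case: valid valid' => graph matA matB [graph' matA' matB'] u1.
have agree' := agree_on_ball_sym agree.
have u1' : u \in ball e' 1 v by rewrite -(agree_on_ball_ball agree) //; lia.
have fu : on_flip k S Ma Mb u = on_flip k S' Ma' Mb' u.
  apply/idP/idP; [exact: (on_flip_agree agree matA matB graph (leqnn _) u1)|].
  exact: (on_flip_agree agree' matA' matB' graph' (leqnn _) u1').
have eu : flip_end k S Ma Mb u = flip_end k S' Ma' Mb' u.
  apply/idP/idP; [exact: (flip_end_agree agree matA matB graph (leqnn _) u1)|].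
  exact: (flip_end_agree agree' matA' matB' graph' (leqnn _) u1').
have uR : u \in ball e (4 * k + 5) v by apply: ball_le u1; lia.
have [_ _ AA' BB'] := agree uR.
by rewrite /proposes fu eu AA' BB'.
Qed.

Lemma switch_agree w : switch k S Ma Mb v w = switch k S' Ma' Mb' v w.
Proof.
have v1 : v \in ball e 1 v by apply: ball_le (ball_center e v).
rewrite /switch (proposes_agree w v1); case pvw: (proposes k S' Ma' Mb' v w) => //=.
apply: proposes_agree; apply: ball_edge (ball_center e v) _.
case: valid => _ [Ae _ _] [Be _ _]; move: pvw; rewrite -(proposes_agree w v1) /proposes.
by case: ifP => _; [apply: Be|case: ifP => // _; apply: Ae].
Qed.

End SwitchLocal.

Lemma switch_alg_local (T : finType) k : local_in (4 * k + 5) (@switch_alg T k).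
Proof.
move=> e e' S S' Ma Ma' Mb Mb' v valid valid' agree w.
exact: (switch_agree valid valid' agree).
Qed.

Theorem lemma2p7 :
  exists C : nat, forall k : nat, 1 <= k ->
  forall T : finType, exists A : algorithm T,
    local_in (C * k) A /\
    forall (e : rel T) (S : {set T}) (Ma Mb : rel T),
      valid_input e Ma Mb ->
      let Mc := A e S Ma Mb in
      [/\ is_matching e Mc,
          msize Ma <= msize Mc,
          #|VM Ma :\: (VM Mc :|: S)| <= #|(S :&: VM Mc) :\: VM Ma|
        & forall s : nat, s <= #|S :&: VM Mb| -> s <= #|S| ->
            (k - 1) * s <= k * #|S :&: VM Mc| ].
Proof.
exists 9 => k k_gt0 T; exists (@switch_alg T k); split.
  by apply: (local_in_le _ (@switch_alg_local T k)); lia.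
move=> e S Ma Mb [graph matA matB] /=; split.
- exact: switch_matching.
- exact: (msize_switch k S matA matB graph).
- exact: (card_uncovered_Ma_outside_S k S matA matB).
- move=> s le_s _; apply: leq_trans (switch_hits_S k S matA matB).
  by rewrite leq_mul2l le_s orbT.
Qed.
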